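(* Let $G=(V,E)$ be a finite graph with at least one vertex and let $w\ge k>0$ be integers. Let $\mathcal F^w_k$ be the set of all stars $\sigma=\{(A_i,B_i):i=0,\dots,n\}\subseteq\vec S_k$ with $\bigl|\bigcap_{i=0}^nB_i\bigr|<w$. Then $\vec S_k$ is $\mathcal F^w_k$-separable: for all $\vec r,\vec r\,'\in\vec S_k$ with $\vec r\le\vec r\,'$ such that $\mathcal F^w_k$ forces neither $\vec r$ nor $\overleftarrow{r'}$, there is $(X,Y)\in\vec S_k$ that is $\mathcal F^w_k$-linked to $\vec r$ and such that $(Y,X)$ is $\mathcal F^w_k$-linked to $\overleftarrow{r'}$.
   Context: An oriented vertex separation of $G$ is an ordered pair $(A,B)$ with $A\cup B=V$ and no edge between $A\setminus B$ and $B\setminus A$. They form a universe $\vec U$ with $(A,B)\le(C,D)$ iff $A\subseteq C$, $B\supseteq D$; $(A,B)^*=(B,A)$; $(A,B)\vee(C,D)=(A\cup C,B\cap D)$; $(A,B)\wedge(C,D)=(A\cap C,B\cup D)$. $\vec S_k=\{(A,B)\in\vec U:|A\cap B|<k\}$, with separations $s=\{\vec s,\vec s^{\,*}\}$; write $\overleftarrow s=\vec s^{\,*}$; $s$ is degenerate if $\vec s=\overleftarrow s$; $\vec r$ is trivial if some separation $s$ has $\vec r<\vec s$ and $\vec r<\overleftarrow s$. A star is a nonempty set $\sigma$ with $\vec r\le\overleftarrow s$ for all distinct $\vec r,\vec s\in\sigma$. $\mathcal F$ forces $\vec r$ if $\{\overleftarrow r\}\in\mathcal F$ or $r$ is degenerate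 (unforced elements are nontrivial and nondegenerate). For nontrivial nondegenerate $\vec r$, $\vec S_{\ge\vec r}$ is the set of all orientations of separations of $\vec S_k$ having an orientation $\ge\vec r$; for $\vec s_0\ge\vec r$ the shifting map $f:\vec S_{\ge\vec r}\to\vec U$ is $f(\vec s)=\vec s\vee\vec s_0$, $f(\overleftarrow s)=(\vec s\vee\vec s_0)^*$ for all $\vec s\in\vec S_{\ge\vec r}\setminus\{\overleftarrow r\}$ with $\vec s\ge\vec r$. $\vec s_0$ is linked to $\vec r$ if $\vec s_0\ge\vec r$ and $\vec s\vee\vec s_0\in\vec S_k$ for all $\vec s\in\vec S_k$ with $\vec s\ge\vec r$, $\vec s\ne\overleftarrow r$; it is $\mathcal F$-linked to $\vec r$ if moreover $f(\sigma)\in\mathcal F$ for every star $\sigma\in\mathcal F$ with $\sigma\subseteq\vec S_{\ge\vec r}\setminus\{\overleftarrow r\}$ having an element $\ge\vec r$. *)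

From mathcomp Require Import all_boot.
Set Implicit Arguments. Unset Strict Implicit. Unset Printing Implicit Defensive.

Section Seps.
Variable V : finType.

Definition osep := ({set V} * {set V})%type.

Definition is_sep (e : rel V) (s : osep) : bool :=
  (s.1 :|: s.2 == setT) &&
  [forall x, forall y, (x \in s.1 :\: s.2) ==> (y \in s.2 :\: s.1) ==> ~~ e x y].

Definition Sk (e : rel V) (k : nat) : {set osep} :=
  [set s | is_sep e s & #|s.1 :&: s.2| < k].

Definition leS (s t : osep) : bool := (s.1 \subset t.1) && (t.2 \subset s.2).

Definition osinv (s : osep) : osep := (s.2, s.1).

Definition join (s t : osep) : osep := (s.1 :|: t.1, s.2 :&: t.2).

Definition is_star (sigma : {set osep}) : bool :=
  (sigma != set0) &&
  [forall r in sigma, forall s in sigma, (r != s) ==> leS r (osinv s)].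

Definition Fw (e : rel V) (k w : nat) (sigma : {set osep}) : bool :=
  [&& is_star sigma, sigma \subset Sk e k & #|\bigcap_(s in sigma) (s.2 : {set V})| < w].

Definition forces (F : pred {set osep}) (r : osep) : bool :=
  F [set osinv r] || (r == osinv r).

Definition Sge (e : rel V) (k : nat) (r : osep) : {set osep} :=
  [set t in Sk e k | leS r t || leS r (osinv t)].

(* shifting map f: f(s) = s ∨ s0 for s >= r, f(s^star) = (s ∨ s0)^star *)
Definition shift (r s0 t : osep) : osep :=
  if leS r t then join t s0 else osinv (join (osinv t) s0).

Definition linked (e : rel V) (k : nat) (r s0 : osep) : Prop :=
  leS r s0 /\
  (forall s, s \in Sk e k -> leS r s -> s != osinv r -> join s s0 \in Sk e k).

Definition Flinked (F : pred {set osep}) (e : rel V) (k : nat) (r s0 : osep) : Prop :=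
  linked e k r s0 /\
  (forall sigma : {set osep}, is_star sigma -> F sigma ->
     sigma \subset (Sge e k r :\ osinv r) ->
     (exists2 s, s \in sigma & leS r s) ->
     F (shift r s0 @: sigma)).

End Seps.

From mathcomp Require Import all_boot zify.
Set Implicit Arguments. Unset Strict Implicit. Unset Printing Implicit Defensive.

(* Take s0 of minimal order among the separations between r and r'.  For any
   separation s >= r, the meet s /\ s0 also lies between r and r', so by
   submodularity of the order s \/ s0 is no larger than s: s0 is linked to r.
   Since r is unforced, its A-side has at least w >= k vertices, so r is not
   below r^*; hence in a star of F containing some s >= r every other member t
   satisfies r <= t^*, and the shift sends s to s \/ s0 and t to
   t /\ s0^*, again a star in S_k.  Comparing s0 with its meet with the
   infimum u of the t^* bounds the common B-side of the shifted star by that of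
   the original one.  Inverting everything, s0^* works for r'^* as well. *)

Section SeparationLattice.
Variable V : finType.
Implicit Types (a b c r : osep V).

Definition meet a b : osep V := (a.1 :&: b.1, a.2 :|: b.2).
Definition osepT : osep V := (setT, set0).
Definition sep_order a := #|a.1 :&: a.2|.

Lemma osinvK : involutive (@osinv V).
Proof. by case. Qed.

Lemma osinv_join a b : osinv (join a b) = meet (osinv a) (osinv b).
Proof. by []. Qed.

Lemma osinv_meet a b : osinv (meet a b) = join (osinv a) (osinv b).
Proof. by []. Qed.

Lemma sep_order_osinv a : sep_order (osinv a) = sep_order a.
Proof. by rewrite /sep_order setIC. Qed.

Lemma sep_order_submod a b :
  sep_order (join a b) + sep_order (meet a b) <= sep_order a + sep_order b.
Proof.
rewrite /sep_order -[X in _ <= X]cardsUI -[X in X <= _]cardsUI.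
apply: leq_add; apply/subset_leq_card/subsetP => v; rewrite !inE;
  by case: (v \in a.1); case: (v \in a.2); case: (v \in b.1); case: (v \in b.2).
Qed.

Lemma leS_refl a : leS a a.
Proof. by rewrite /leS !subxx. Qed.

Lemma leS_trans b a c : leS a b -> leS b c -> leS a c.
Proof.
move=> /andP[ab1 ba2] /andP[bc1 cb2].
by rewrite /leS (subset_trans ab1 bc1) (subset_trans cb2 ba2).
Qed.

Lemma leS_osinv a b : leS (osinv a) (osinv b) = leS b a.
Proof. by rewrite /leS andbC. Qed.

Lemma leS_joinl a b : leS a (join a b).
Proof. by rewrite /leS subsetUl subsetIl. Qed.

Lemma leS_join2r c a b : leS a b -> leS (join a c) (join b c).
Proof. by move=> /andP[ab1 ba2]; rewrite /leS setSU // setSI. Qed.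

Lemma leS_meetl a b : leS (meet a b) a.
Proof. by rewrite /leS subsetIl subsetUl. Qed.

Lemma leS_meetr a b : leS (meet a b) b.
Proof. by rewrite /leS subsetIr subsetUr. Qed.

Lemma leS_meet r a b : leS r a -> leS r b -> leS r (meet a b).
Proof.
by move=> /andP[ra1 ar2] /andP[rb1 br2]; rewrite /leS subsetI ra1 rb1 subUset ar2 br2.
Qed.

Lemma leS_osepT r : leS r osepT.
Proof. by rewrite /leS subsetT sub0set. Qed.

Lemma star_leS (sigma : {set osep V}) a b :
  is_star sigma -> a \in sigma -> b \in sigma -> a != b -> leS a (osinv b).
Proof.
case/andP => _ /forall_inP star a_in b_in.
by move/forall_inP: (star a a_in) => /(_ b b_in) /implyP.
Qed.

Lemma bigmeet_fst (I : Type) (s : seq I) (P : pred I) (F : I -> osep V) :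
  (\big[meet/osepT]_(i <- s | P i) F i).1 = \bigcap_(i <- s | P i) (F i).1.
Proof. exact: (big_morph (@fst {set V} {set V}) (id1 := setT) (op1 := @setI V)). Qed.

Lemma bigmeet_snd (I : Type) (s : seq I) (P : pred I) (F : I -> osep V) :
  (\big[meet/osepT]_(i <- s | P i) F i).2 = \bigcup_(i <- s | P i) (F i).2.
Proof. exact: (big_morph (@snd {set V} {set V}) (id1 := set0) (op1 := @setU V)). Qed.

End SeparationLattice.

(* The counting core of the shifting argument: (X, Y) is s0, (A, B) the
   infimum u of the inverted other members of the star, S the B-side of the
   member above r, and the second hypothesis is the minimality of s0 against
   the meet u /\ s0. *)
Lemma card_shift_bound (T : finType) (X Y A B S : {set T}) :
  B \subset S -> #|X :&: Y| <= #|(A :&: X) :&: (B :|: Y)| ->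
  #|S :&: Y :&: (A :|: X)| <= #|S :&: A|.
Proof.
move=> /subsetP BS min_XY.
have lo : #|(A :&: X) :&: (B :|: Y)| <= #|X :&: Y :&: A| + #|S :&: A :&: X :\: Y|.
  apply: leq_trans (leq_card_setU _ _); apply: subset_leq_card; apply/subsetP => v.
  rewrite !inE; case: (boolP (v \in B)) => [/BS -> | _]; rewrite ?orbF;
  by case: (v \in A); case: (v \in X); case: (v \in Y).
have hi : #|S :&: Y :&: (A :|: X)| <= #|S :&: A :&: Y| + #|X :&: Y :\: A|.
  apply: leq_trans (leq_card_setU _ _); apply: subset_leq_card; apply/subsetP => v.
  by rewrite !inE; case: (v \in S); case: (v \in A); case: (v \in X); case: (v \in Y).
have XYA := cardsID A (X :&: Y).
have SAY := cardsID Y (S :&: A).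
have drop_X : #|S :&: A :&: X :\: Y| <= #|S :&: A :\: Y|.
  exact/subset_leq_card/setSD/subsetIl.
lia.
Qed.

Section Separations.
Variables (V : finType) (e : rel V).
Implicit Types (a b r s : osep V).

Lemma is_sepP s :
  reflect ((forall v, v \in s.1 \/ v \in s.2) /\
           (forall x y, x \in s.1 -> x \notin s.2 -> y \in s.2 -> y \notin s.1 -> ~~ e x y))
          (is_sep e s).
Proof.
apply: (iffP andP) => -[cover no_edge]; split.
- by move=> v; apply/orP; rewrite -in_setU (eqP cover) inE.
- move=> x y x1 x2 y2 y1; move/forallP: no_edge => /(_ x) /forallP /(_ y).
  by rewrite !inE x1 x2 y1 y2.
- by apply/eqP/setP => v; rewrite !inE; apply/orP.
- apply/forallP => x; apply/forallP => y; rewrite !inE.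
  by apply/implyP => /andP[x2 x1]; apply/implyP => /andP[y1 y2]; apply: no_edge.
Qed.

Lemma is_sep_join a b : is_sep e a -> is_sep e b -> is_sep e (join a b).
Proof.
move=> /is_sepP[Ua Ea] /is_sepP[Ub Eb]; apply/is_sepP; split => [v|x y] /=; rewrite !inE.
- case: (Ua v) => [-> | a2]; first by left.
  case: (Ub v) => [-> | b2]; first by left; rewrite orbT.
  by right; rewrite a2 b2.
- move: (Ea x y) (Eb x y) (Ua x) (Ub x) (Ua y) (Ub y).
  case: (x \in a.1); case: (x \in a.2); case: (x \in b.1); case: (x \in b.2);
  case: (y \in a.1); case: (y \in a.2); case: (y \in b.1); case: (y \in b.2) => //=;
  intuition.
Qed.

Lemma is_sep_osepT : is_sep e (osepT V).
Proof. by apply/is_sepP; split => [v|x y]; rewrite !inE //; left. Qed.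

Hypothesis e_sym : symmetric e.

Lemma is_sep_osinv s : is_sep e (osinv s) = is_sep e s.
Proof.
suff sep_inv b : is_sep e b -> is_sep e (osinv b).
  by apply/idP/idP => /sep_inv //; rewrite osinvK.
move=> /is_sepP[U E]; apply/is_sepP; split => [v|x y x2 x1 y1 y2] /=.
- by case: (U v); auto.
- by rewrite e_sym; apply: E.
Qed.

Lemma is_sep_meet a b : is_sep e a -> is_sep e b -> is_sep e (meet a b).
Proof.
move=> sa sb; rewrite -is_sep_osinv.
by apply: (@is_sep_join (osinv a) (osinv b)); rewrite is_sep_osinv.
Qed.

Lemma Sk_osinv k s : (osinv s \in Sk e k) = (s \in Sk e k).
Proof. by rewrite !inE is_sep_osinv /= setIC. Qed.

Lemma unforced_not_leS_osinv k w r : k <= w -> r \in Sk e k ->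
  ~~ forces (Fw e k w) r -> ~~ leS r (osinv r).
Proof.
move=> k_le_w r_Sk; rewrite /forces negb_or => /andP[/negP not_F _].
apply/negP => /andP[r12 _]; apply: not_F.
have r1_small : #|r.1| < w.
  by move: r_Sk; rewrite inE (setIidPl r12) => /andP[_ /leq_trans]; apply.
rewrite /Fw /is_star sub1set Sk_osinv r_Sk big_set1 r1_small !andbT.
apply/andP; split; first by apply/set0Pn; exists (osinv r); rewrite set11.
by apply/forall_inP => a /set1P-> ; apply/forall_inP => b /set1P->; rewrite eqxx.
Qed.

End Separations.

Section MinimalSeparation.
Variables (V : finType) (e : rel V).
Hypothesis e_sym : symmetric e.
Variables (k : nat) (r q s0 : osep V).
Hypotheses (s0_sep : is_sep e s0) (r_le_s0 : leS r s0) (s0_le_q : leS s0 q).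
Hypothesis s0_min : forall z, is_sep e z -> leS r z -> leS z q -> sep_order s0 <= sep_order z.

Lemma sep_order_join_min s : is_sep e s -> leS r s -> sep_order (join s s0) <= sep_order s.
Proof.
move=> s_sep r_le_s; have := sep_order_submod s s0.
have : sep_order s0 <= sep_order (meet s s0).
  apply: s0_min; [exact: is_sep_meet | exact: leS_meet |].
  exact: leS_trans (leS_meetr _ _) s0_le_q.
lia.
Qed.

Lemma join_Sk s : s \in Sk e k -> leS r s -> join s s0 \in Sk e k.
Proof.
rewrite !inE => /andP[s_sep s_small] r_le_s; rewrite is_sep_join //=.
exact: leq_ltn_trans (sep_order_join_min s_sep r_le_s) s_small.
Qed.

Lemma linked_min : linked e k r s0.
Proof. by split => // s s_Sk r_le_s _; apply: join_Sk. Qed.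

Section ShiftedStar.
Variables (sigma : {set osep V}) (s : osep V).
Hypotheses (r_nontriv : ~~ leS r (osinv r)) (sigma_star : is_star sigma).
Hypotheses (sigma_Sk : sigma \subset Sk e k) (sigma_ge : sigma \subset Sge e k r :\ osinv r).
Hypotheses (s_in : s \in sigma) (r_le_s : leS r s).

Lemma not_leS_other t : t \in sigma -> t != s -> ~~ leS r t.
Proof.
move=> t_in t_neq; apply: contra r_nontriv => r_le_t.
apply: leS_trans r_le_t (leS_trans (star_leS sigma_star t_in s_in t_neq) _).
by rewrite leS_osinv.
Qed.

Lemma leS_osinv_other t : t \in sigma -> t != s -> leS r (osinv t).
Proof.
move=> t_in t_neq; move/subsetP: sigma_ge => /(_ t t_in).
by rewrite !inE (negbTE (not_leS_other t_in t_neq)) => /and3P[].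
Qed.

Lemma shift_self : shift r s0 s = join s s0.
Proof. by rewrite /shift r_le_s. Qed.

Lemma shift_other t : t \in sigma -> t != s -> shift r s0 t = meet t (osinv s0).
Proof.
by move=> t_in t_neq; rewrite /shift (negbTE (not_leS_other t_in t_neq)) osinv_join osinvK.
Qed.

Lemma is_star_shift : is_star (shift r s0 @: sigma).
Proof.
rewrite /is_star imset_eq0; apply/andP; split; first by case/andP: sigma_star.
apply/forall_inP => _ /imsetP[t1 t1_in ->]; apply/forall_inP => _ /imsetP[t2 t2_in ->].
apply/implyP => neq; have t12 : t1 != t2 by apply: contraNneq neq => ->.
case: (eqVneq t1 s) => [t1s | t1s]; case: (eqVneq t2 s) => [t2s | t2s].
- by rewrite t1s t2s eqxx in t12.
- rewrite t1s shift_self shift_other // osinv_meet osinvK; apply: leS_join2r.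
  by apply: (star_leS sigma_star) => //; rewrite eq_sym.
- rewrite t2s shift_self shift_other // -leS_osinv osinv_meet !osinvK; apply: leS_join2r.
  by apply: (star_leS sigma_star) => //; rewrite eq_sym.
- rewrite !shift_other // osinv_meet osinvK.
  apply: leS_trans (leS_meetl _ _) (leS_trans _ (leS_joinl _ _)).
  exact: star_leS sigma_star t1_in t2_in t12.
Qed.

Lemma shift_Sk : shift r s0 @: sigma \subset Sk e k.
Proof.
apply/subsetP => _ /imsetP[t t_in ->].
case: (eqVneq t s) => [-> | t_neq].
  by rewrite shift_self join_Sk // (subsetP sigma_Sk).
rewrite shift_other // -Sk_osinv // osinv_meet osinvK.
by apply: join_Sk; [rewrite Sk_osinv // (subsetP sigma_Sk) | exact: leS_osinv_other].
Qed.

Lemma card_bigcap_shift :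
  #|\bigcap_(u in shift r s0 @: sigma) u.2| <= #|\bigcap_(t in sigma) t.2|.
Proof.
pose u := \big[@meet V/osepT V]_(t in sigma | t != s) osinv t.
have u_sep : is_sep e u.
  apply: (big_ind (fun z => is_sep e z)); [exact: is_sep_osepT | exact: is_sep_meet |].
  move=> t /andP[t_in _]; rewrite is_sep_osinv //.
  by move/subsetP: sigma_Sk => /(_ t t_in); rewrite inE => /andP[].
have r_le_u : leS r u.
  apply: (big_ind (fun z => leS r z)); [exact: leS_osepT | exact: leS_meet |].
  by move=> t /andP[]; exact: leS_osinv_other.
have u1 : u.1 = \bigcap_(t in sigma | t != s) t.2 by rewrite bigmeet_fst.
have u2 : u.2 = \bigcup_(t in sigma | t != s) t.1 by rewrite bigmeet_snd.
have min := s0_min (is_sep_meet e_sym u_sep s0_sep) (leS_meet r_le_u r_le_s0)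
  (leS_trans (leS_meetr _ _) s0_le_q).
rewrite (bigD1 s s_in) /= -u1.
apply: leq_trans (card_shift_bound _ min).
  apply/subset_leq_card/subsetP => v /bigcapP v_in.
  have := v_in _ (imset_f _ s_in); rewrite shift_self => /setIP[v_s v_Y].
  rewrite !inE v_s v_Y u1 /=; apply/orP.
  case: (boolP (v \in s0.1)) => v_X; [by right | left].
  apply/bigcapP => t /andP[t_in t_neq].
  by have := v_in _ (imset_f _ t_in); rewrite shift_other // => /setUP[// | /(negP v_X)].
rewrite u2; apply/bigcupsP => t /andP[t_in t_neq].
by case/andP: (star_leS sigma_star t_in s_in t_neq).
Qed.

End ShiftedStar.

Lemma Flinked_min w : ~~ leS r (osinv r) -> Flinked (Fw e k w) e k r s0.
Proof.
move=> r_nontriv; split; first exact: linked_min.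
move=> sigma sigma_star /and3P[_ sigma_Sk sigma_small] sigma_ge [s s_in r_le_s].
apply/and3P; split; first exact: (is_star_shift (s := s)).
  exact: (shift_Sk (s := s)).
exact: leq_ltn_trans (card_bigcap_shift (s := s) _ _ _ _ _ _) sigma_small.
Qed.

End MinimalSeparation.

Theorem lemma5p18 (V : finType) (e : rel V)
  (e_sym : symmetric e) (e_irr : irreflexive e) (V_nonempty : 0 < #|V|)
  (k w : nat) (k_pos : 0 < k) (k_le_w : k <= w) :
  forall r r' : osep V,
    r \in Sk e k -> r' \in Sk e k -> leS r r' ->
    ~~ forces (Fw e k w) r -> ~~ forces (Fw e k w) (osinv r') ->
    exists X Y : {set V},
      (X, Y) \in Sk e k /\
      Flinked (Fw e k w) e k r (X, Y) /\
      Flinked (Fw e k w) e k (osinv r') (Y, X).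
Proof.
move=> r r' r_Sk r'_Sk r_le_r' unforced_r unforced_r'.
have r_sep : is_sep e r by move: r_Sk; rewrite inE => /andP[].
pose between z := [&& is_sep e z, leS r z & leS z r'].
have between_r : between r by rewrite /between r_sep leS_refl r_le_r'.
have [s0 /and3P[s0_sep r_le_s0 s0_le_r'] s0_min] := arg_minnP (@sep_order V) between_r.
have s0_min' z : is_sep e z -> leS r z -> leS z r' -> sep_order s0 <= sep_order z.
  by move=> z_sep r_le_z z_le_r'; apply: s0_min; apply/and3P.
exists s0.1, s0.2; rewrite -surjective_pairing; split; last split.
- rewrite inE s0_sep; apply: leq_ltn_trans (s0_min' r r_sep (leS_refl r) r_le_r') _.
  by move: r_Sk; rewrite inE => /andP[].
- apply: (Flinked_min e_sym k s0_sep r_le_s0 s0_le_r' s0_min').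
  exact: (unforced_not_leS_osinv e_sym k_le_w r_Sk unforced_r).
- have osinv_s0_min z : is_sep e z -> leS (osinv r') z -> leS z (osinv r) ->
      sep_order (osinv s0) <= sep_order z.
    move=> z_sep r'_le_z z_le_r; rewrite sep_order_osinv -[sep_order z]sep_order_osinv.
    by apply: s0_min'; rewrite ?is_sep_osinv // -leS_osinv osinvK.
  apply: (Flinked_min e_sym k _ _ _ osinv_s0_min); rewrite ?is_sep_osinv ?leS_osinv //.
  by apply: (unforced_not_leS_osinv e_sym k_le_w) unforced_r'; rewrite Sk_osinv.
Qed.
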